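(* Let $(x_+,x_-,1)$ be an efficient solution of the QCQP (i.e. with robustness level $r=1$). Let $v=(1,x_+^T,x_-^T,1)^T\in\mathbb{R}^{2n+2}$. Then the rank-one matrix $Z=vv^T$ is feasible and efficient for the SDP relaxation.
   Context: Let $k,m,n\in\mathbb{N}$. Let $A_c,A_\delta\in\mathbb{R}^{m\times n}$ with $A_\delta\ge 0$ entrywise, $b_c,b_\delta\in\mathbb{R}^m$ with $b_\delta\ge0$, $G\in\mathbb{R}^{k\times n}$, and $\ell,u\in\mathbb{R}^n$ with $\ell\le u$. All vector inequalities are componentwise. QCQP: variables $x_+,x_-\in\mathbb{R}^n_{\ge0}$, $r\in[0,1]$, subject to $A_cx_+-A_cx_-+rA_\delta x_++rA_\delta x_-+rb_\delta-b_c\le0$ and $\ell\le x_+-x_-\le u$; vector objective $F(x_+,x_-,r)=(G(x_+-x_-),-r)\in\mathbb{R}^{k+1}$, minimized in the Pareto sense. SDP relaxation: variable a symmetric positive semidefinite matrix $Z$ of size $(2n+2)\times(2n+2)$ written in block form with row/column blocks of sizes $1,n,n,1$: $Z=\begin{pmatrix} Z_{00} & z_+^T & z_-^T & \rho\\ z_+ & * & * & w_+\\ z_- & * & * & w_-\\ \rho & w_+^T & w_-^T & \sigma\end{pmatrix}$, with $z_\pm,w_\pm\in\mathbb{R}^n$, $\rho,\sigma\in\mathbb{R}$. Constraints: $Z_{00}=1$; $A_cz_+-A_cz_-+A_\delta(w_++w_-)+\rho\, b_\delta-b_c\le0$; $\ell\le z_+-z_-\le u$; $z_+,z_-\ge0$,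 $\rho\ge0$, $w_+,w_-\ge0$; $\sigma\le1$. Vector objective $(G(z_+-z_-),-\rho)\in\mathbb{R}^{k+1}$, minimized in the Pareto sense. Efficiency (for minimizing a vector function $f$ over a feasible set $\mathcal{X}$): $x^*\in\mathcal{X}$ is efficient if there is no $x\in\mathcal{X}$ with $f(x)\le f(x^* )$ and $f(x)\ne f(x^* )$. *)

From HB Require Import structures.
From mathcomp Require Import all_boot all_order all_algebra.
Set Implicit Arguments. Unset Strict Implicit. Unset Printing Implicit Defensive.
Import Order.TTheory GRing.Theory Num.Theory.
Local Open Scope ring_scope.

Section Defs.
Variable R : realFieldType.

Definition mle (p q : nat) (A B : 'M[R]_(p, q)) : Prop :=
  forall i j, A i j <= B i j.

Definition efficient (X : Type) (p : nat) (S : X -> Prop) (f : X -> 'cV[R]_p)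
  (x : X) : Prop :=
  S x /\ ~ (exists y, S y /\ mle (f y) (f x) /\ f y <> f x).

Definition qcqp_feasible (m n : nat) (Ac Ad : 'M[R]_(m, n)) (bc bd : 'cV[R]_m)
  (l u : 'cV[R]_n) (x : 'cV[R]_n * 'cV[R]_n * R) : Prop :=
  let: (xp, xm, r) := x in
  [/\ mle 0 xp, mle 0 xm, 0 <= r /\ r <= 1,
      mle (Ac *m xp - Ac *m xm + r *: (Ad *m xp) + r *: (Ad *m xm)
           + r *: bd - bc) 0
    & mle l (xp - xm) /\ mle (xp - xm) u].

Definition qcqp_obj (k n : nat) (G : 'M[R]_(k, n))
  (x : 'cV[R]_n * 'cV[R]_n * R) : 'cV[R]_(k + 1) :=
  let: (xp, xm, r) := x in col_mx (G *m (xp - xm)) (- r)%:M.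

(** Block indices of a (1+n+n+1) x (1+n+n+1) matrix, blocks of sizes 1,n,n,1. *)
Definition idx0 (n : nat) : 'I_(1 + n + n + 1) :=
  lshift 1 (lshift n (lshift n (ord0 : 'I_1))).
Definition idxP (n : nat) (i : 'I_n) : 'I_(1 + n + n + 1) :=
  lshift 1 (lshift n (rshift 1 i)).
Definition idxM (n : nat) (i : 'I_n) : 'I_(1 + n + n + 1) :=
  lshift 1 (rshift (1 + n) i).
Definition idxL (n : nat) : 'I_(1 + n + n + 1) :=
  rshift (1 + n + n) (ord0 : 'I_1).

Section Blocks.
Variables (n : nat) (Z : 'M[R]_(1 + n + n + 1)).
Definition Z00 : R := Z (idx0 n) (idx0 n).
Definition zP : 'cV[R]_n := \col_i Z (idxP i) (idx0 n).
Definition zM : 'cV[R]_n := \col_i Z (idxM i) (idx0 n).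
Definition rho : R := Z (idxL n) (idx0 n).
Definition wP : 'cV[R]_n := \col_i Z (idxP i) (idxL n).
Definition wM : 'cV[R]_n := \col_i Z (idxM i) (idxL n).
Definition sigma : R := Z (idxL n) (idxL n).
End Blocks.

Definition psd (N : nat) (Z : 'M[R]_N) : Prop :=
  Z^T = Z /\ forall x : 'cV[R]_N, 0 <= (x^T *m Z *m x) ord0 ord0.

Definition sdp_feasible (m n : nat) (Ac Ad : 'M[R]_(m, n)) (bc bd : 'cV[R]_m)
  (l u : 'cV[R]_n) (Z : 'M[R]_(1 + n + n + 1)) : Prop :=
  [/\ psd Z, Z00 Z = 1,
      mle (Ac *m zP Z - Ac *m zM Z + Ad *m (wP Z + wM Z) + rho Z *: bd - bc) 0,
      mle l (zP Z - zM Z) /\ mle (zP Z - zM Z) u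
    & [/\ mle 0 (zP Z), mle 0 (zM Z), 0 <= rho Z,
          mle 0 (wP Z) /\ mle 0 (wM Z) & sigma Z <= 1]].

Definition sdp_obj (k n : nat) (G : 'M[R]_(k, n)) (Z : 'M[R]_(1 + n + n + 1))
  : 'cV[R]_(k + 1) :=
  col_mx (G *m (zP Z - zM Z)) (- rho Z)%:M.

Definition vvec (n : nat) (xp xm : 'cV[R]_n) : 'cV[R]_(1 + n + n + 1) :=
  col_mx (col_mx (col_mx 1 xp) xm) 1.

End Defs.

(** If [Y] dominates [v v^T] for the SDP objective, then [rho Y >= 1].  The
    [2 x 2] principal minor of [Y] on the first and last index, with
    [Z00 Y = 1] and [sigma Y <= 1], forces [rho Y = sigma Y = 1]; then
    [e_0 - e_L] is an isotropic vector of the positive semidefinite form of [Y],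
    hence lies in its kernel, i.e. the first and the last column of [Y]
    coincide.  So [wP Y = zP Y] and [wM Y = zM Y], and [(zP Y, zM Y, 1)] is
    QCQP-feasible with the same objective as [Y], contradicting the efficiency
    of [(x_+, x_-, 1)]. *)

From HB Require Import structures.
From mathcomp Require Import all_boot all_order all_algebra.
From mathcomp Require Import ring lra.
Import Order.TTheory GRing.Theory Num.Theory.
Local Open Scope ring_scope.

Lemma quad_ge0_lin0 (R : realFieldType) (a b : R) :
  (forall t, 0 <= 2 * t * a + t ^+ 2 * b) -> a = 0.
Proof.
move=> hq.
have hb : 0 <= b by have := hq 1; have := hq (-1); lra.
have hb1 : 0 < b + 1 by lra.
have := hq (- a / (b + 1)).
have -> : 2 * (- a / (b + 1)) * a + (- a / (b + 1)) ^+ 2 * b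
          = - (a ^+ 2 * (b + 2)) / (b + 1) ^+ 2.
  by field; rewrite gt_eqF.
rewrite pmulr_lge0 ?invr_gt0 ?exprn_gt0 // oppr_ge0 => ha.
apply/eqP; rewrite -sqrf_eq0 eq_le sqr_ge0 andbT.
by rewrite -(pmulr_lle0 _ (_ : 0 < b + 2)) //; lra.
Qed.

Section BilinearForm.
Variables (R : realFieldType) (N : nat) (Z : 'M[R]_N).

Definition bform (x y : 'cV[R]_N) : R := (x^T *m Z *m y) ord0 ord0.

Lemma bformDr x y1 y2 : bform x (y1 + y2) = bform x y1 + bform x y2.
Proof. by rewrite /bform mulmxDr mxE. Qed.

Lemma bformDl x1 x2 y : bform (x1 + x2) y = bform x1 y + bform x2 y.
Proof. by rewrite /bform linearD /= !mulmxDl mxE. Qed.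

Lemma bformZr a x y : bform x (a *: y) = a * bform x y.
Proof. by rewrite /bform -scalemxAr mxE. Qed.

Lemma bformZl a x y : bform (a *: x) y = a * bform x y.
Proof. by rewrite /bform linearZ /= -!scalemxAl mxE. Qed.

Lemma bformNr x y : bform x (- y) = - bform x y.
Proof. by rewrite -scaleN1r bformZr mulN1r. Qed.

Lemma bformNl x y : bform (- x) y = - bform x y.
Proof. by rewrite -scaleN1r bformZl mulN1r. Qed.

Lemma bform_delta i j :
  bform (delta_mx i ord0) (delta_mx j ord0) = Z i j.
Proof.
rewrite /bform trmx_delta (_ : delta_mx ord0 i = delta_mx 0 i) //.
by rewrite (_ : delta_mx j ord0 = delta_mx j 0) // -rowE -colE !mxE.
Qed.

Lemma bformC : Z^T = Z -> forall x y, bform x y = bform y x.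
Proof.
move=> hZ x y; rewrite /bform.
have -> : (x^T *m Z *m y) ord0 ord0 = ((x^T *m Z *m y)^T) ord0 ord0 by rewrite [RHS]mxE.
by rewrite !trmx_mul trmxK hZ mulmxA.
Qed.

Lemma psd_isotropic_ker x y : psd Z -> bform x x = 0 -> bform y x = 0.
Proof.
move=> [hZ hq] hx; apply: quad_ge0_lin0 (bform y y) _ => t.
have := hq (x + t *: y); rewrite -/(bform _ _).
rewrite bformDl !bformDr !bformZl !bformZr hx (bformC hZ x y).
by congr (_ <= _); ring.
Qed.

End BilinearForm.

Arguments bform {R N}.
Arguments bformC {R N Z}.
Arguments psd_isotropic_ker {R N Z}.

Lemma psd_outer (R : realFieldType) (N : nat) (v : 'cV[R]_N) : psd (v *m v^T).
Proof.
split=> [|x]; first by rewrite trmx_mul trmxK.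
rewrite !mulmxA -mulmxA (_ : v^T *m x = (x^T *m v)^T); last first.
  by rewrite trmx_mul trmxK.
by rewrite mxE big_ord1 [(x^T *m v)^T _ _]mxE -expr2 sqr_ge0.
Qed.

Lemma psd_col_eq (R : realFieldType) (N : nat) (Y : 'M[R]_N) (i j : 'I_N) :
  psd Y -> Y i i = 1 -> Y j j <= 1 -> 1 <= Y j i ->
  Y j i = 1 /\ forall h, Y h i = Y h j.
Proof.
move=> hY hii hjj hji.
have hsym : Y i j = Y j i by rewrite -!bform_delta (bformC (proj1 hY)).
pose ei : 'cV[R]_N := delta_mx i ord0.
pose ej : 'cV[R]_N := delta_mx j ord0.
have hminor : 0 <= Y j j - Y j i ^+ 2.
  have : 0 <= bform Y (Y j i *: ei - ej) (Y j i *: ei - ej) by apply: (proj2 hY).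
  by rewrite bformDl !bformDr !bformZl !bformNl !bformZr !bformNr !bform_delta
             hsym hii; congr (_ <= _); ring.
have hji1 : Y j i = 1 by nra.
have hjj1 : Y j j = 1 by nra.
split=> // h.
have hiso : bform Y (ei - ej) (ei - ej) = 0.
  rewrite bformDl !bformDr !bformNl !bformNr !bform_delta hsym hji1 hii hjj1.
  lra.
have := psd_isotropic_ker _ (delta_mx h ord0) hY hiso.
by rewrite bformDr bformNr !bform_delta => /eqP; rewrite subr_eq0 => /eqP.
Qed.

Section RankOneLift.
Variables (R : realFieldType) (n : nat) (xp xm : 'cV[R]_n).
Let v := vvec xp xm.

Lemma outer_vvecE i j : (v *m v^T) i j = v i ord0 * v j ord0.
Proof. by rewrite mxE big_ord1 [v^T _ _]mxE. Qed.

Lemma vvec_idx0 : v (idx0 n) ord0 = 1.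
Proof. by rewrite /v /vvec /idx0 !col_mxEu mxE. Qed.

Lemma vvec_idxL : v (idxL n) ord0 = 1.
Proof. by rewrite /v /vvec /idxL col_mxEd mxE. Qed.

Lemma vvec_idxP i : v (idxP i) ord0 = xp i ord0.
Proof. by rewrite /v /vvec /idxP !col_mxEu col_mxEd. Qed.

Lemma vvec_idxM i : v (idxM i) ord0 = xm i ord0.
Proof. by rewrite /v /vvec /idxM col_mxEu col_mxEd. Qed.

Lemma zP_outer_vvec : zP (v *m v^T) = xp.
Proof.
by apply/matrixP=> i j; rewrite mxE outer_vvecE vvec_idxP vvec_idx0 mulr1 (ord1 j).
Qed.

Lemma zM_outer_vvec : zM (v *m v^T) = xm.
Proof.
by apply/matrixP=> i j; rewrite mxE outer_vvecE vvec_idxM vvec_idx0 mulr1 (ord1 j).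
Qed.

Lemma wP_outer_vvec : wP (v *m v^T) = xp.
Proof.
by apply/matrixP=> i j; rewrite mxE outer_vvecE vvec_idxP vvec_idxL mulr1 (ord1 j).
Qed.

Lemma wM_outer_vvec : wM (v *m v^T) = xm.
Proof.
by apply/matrixP=> i j; rewrite mxE outer_vvecE vvec_idxM vvec_idxL mulr1 (ord1 j).
Qed.

Lemma rho_outer_vvec : rho (v *m v^T) = 1.
Proof. by rewrite /rho outer_vvecE vvec_idxL vvec_idx0 mulr1. Qed.

Lemma sigma_outer_vvec : sigma (v *m v^T) = 1.
Proof. by rewrite /sigma outer_vvecE vvec_idxL mulr1. Qed.

Lemma Z00_outer_vvec : Z00 (v *m v^T) = 1.
Proof. by rewrite /Z00 outer_vvecE vvec_idx0 mulr1. Qed.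

Lemma sdp_obj_outer_vvec k (G : 'M[R]_(k, n)) :
  sdp_obj G (v *m v^T) = qcqp_obj G (xp, xm, 1).
Proof. by rewrite /sdp_obj zP_outer_vvec zM_outer_vvec rho_outer_vvec. Qed.

Lemma sdp_feasible_outer_vvec m (Ac Ad : 'M[R]_(m, n)) (bc bd : 'cV[R]_m)
    (l u : 'cV[R]_n) :
  qcqp_feasible Ac Ad bc bd l u (xp, xm, 1) ->
  sdp_feasible Ac Ad bc bd l u (v *m v^T).
Proof.
case=> hxp hxm _ hc hlu.
rewrite /sdp_feasible zP_outer_vvec zM_outer_vvec wP_outer_vvec wM_outer_vvec.
rewrite rho_outer_vvec sigma_outer_vvec Z00_outer_vvec.
split=> //; first exact: psd_outer.
by move: hc; rewrite !scale1r mulmxDr !addrA.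
Qed.

End RankOneLift.

Section SDPTight.
Variables (R : realFieldType) (m n : nat) (Ac Ad : 'M[R]_(m, n)).
Variables (bc bd : 'cV[R]_m) (l u : 'cV[R]_n) (Y : 'M[R]_(1 + n + n + 1)).
Hypotheses (hY : sdp_feasible Ac Ad bc bd l u Y) (hrho : 1 <= rho Y).

Lemma sdp_tight_rho : rho Y = 1 /\ wP Y = zP Y /\ wM Y = zM Y.
Proof.
case: hY => hpsd h00 _ _ [_ _ _ _ hsigma].
have [hrho1 hcol] := @psd_col_eq _ _ Y (idx0 n) (idxL n) hpsd h00 hsigma hrho.
by split=> //; split; apply/matrixP=> i j; rewrite !mxE hcol.
Qed.

Lemma qcqp_feasible_sdp_tight :
  qcqp_feasible Ac Ad bc bd l u (zP Y, zM Y, 1).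
Proof.
have [hrho1 [hwP hwM]] := sdp_tight_rho.
case: hY => _ _ hc hlu [hzP hzM _ _ _].
split=> //.
by move: hc; rewrite hwP hwM hrho1 !scale1r mulmxDr !addrA.
Qed.

Lemma sdp_obj_tight k (G : 'M[R]_(k, n)) :
  sdp_obj G Y = qcqp_obj G (zP Y, zM Y, 1).
Proof. by rewrite /sdp_obj (proj1 sdp_tight_rho). Qed.

End SDPTight.

Arguments qcqp_feasible_sdp_tight {R m n Ac Ad bc bd l u Y}.
Arguments sdp_obj_tight {R m n Ac Ad bc bd l u Y} hY hrho {k} G.

Lemma sdp_obj_rho (R : realFieldType) (k n : nat) (G : 'M[R]_(k, n))
    (Y : 'M[R]_(1 + n + n + 1)) :
  sdp_obj G Y (rshift k (ord0 : 'I_1)) ord0 = - rho Y.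
Proof. by rewrite /sdp_obj col_mxEd mxE mulr1n. Qed.

Theorem mainTheorem5 (R : realFieldType) (k m n : nat)
  (Ac Ad : 'M[R]_(m, n)) (bc bd : 'cV[R]_m) (G : 'M[R]_(k, n))
  (l u : 'cV[R]_n)
  (hAd : mle 0 Ad) (hbd : mle 0 bd) (hlu : mle l u)
  (xp xm : 'cV[R]_n) :
  efficient (qcqp_feasible Ac Ad bc bd l u) (qcqp_obj G) (xp, xm, 1) ->
  let v := vvec xp xm in
  let Z := v *m v^T in
  sdp_feasible Ac Ad bc bd l u Z /\
  efficient (sdp_feasible Ac Ad bc bd l u) (sdp_obj G) Z.
Proof.
move=> [hx hx_eff] v Z.
have hZ : sdp_feasible Ac Ad bc bd l u Z by exact: sdp_feasible_outer_vvec.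
split=> //; split=> // -[Y [hY [hle hne]]].
have hrho : 1 <= rho Y.
  have := hle (rshift k ord0) ord0.
  by rewrite !sdp_obj_rho rho_outer_vvec lerN2.
apply: hx_eff; exists (zP Y, zM Y, 1).
rewrite -(sdp_obj_tight hY hrho G) -sdp_obj_outer_vvec.
by split; [exact: qcqp_feasible_sdp_tight hY hrho | split].
Qed.
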